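(* Let $\rho$ be a function quasi-norm over a $\sigma$-finite measure space $(\Omega,\Sigma,\mu)$ and let $f\in L_0^+(\mu)$ with $\rho(f)<\infty$. Then $f$ is dominating if and only if $\lim_n\rho(f\chi_{A_n})=0$ for every non-increasing sequence $(A_n)$ in $\Sigma$ with $\bigcap_nA_n=\emptyset$.
   Context: $L_0^+(\mu)$: measurable functions $\Omega\to[0,\infty]$ modulo a.e. equality. A function quasi-norm is $\rho\colon L_0^+(\mu)\to[0,\infty]$ with (F1) $\rho(tf)=t\rho(f)$, $t\ge0$; (F2) $f\le g$ a.e. $\Rightarrow\rho(f)\le\rho(g)$; (F3) $\rho(\chi_E)<\infty$ if $\mu(E)<\infty$; (F4) for all $E$ with $\mu(E)<\infty$ and $\varepsilon>0$ there is $\delta>0$ with $\mu(A)\le\varepsilon$ whenever $A\subseteq E$ measurable and $\rho(\chi_A)\le\delta$; (F5) $\rho(f+g)\le\kappa(\rho(f)+\rho(g))$. $f$ (with $\rho(f)<\infty$) is dominating if $\lim_n\rho(f_n)=0$ for every non-increasing sequence $(f_n)$ in $L_0^+(\mu)$ with $f_1\le f$ and $\lim_nf_n=0$. *)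

From HB Require Import structures.
From mathcomp Require Import all_boot all_order all_algebra.
From mathcomp Require Import all_classical all_reals all_analysis measurable_realfun.
Set Implicit Arguments. Unset Strict Implicit. Unset Printing Implicit Defensive.
Import Order.TTheory GRing.Theory Num.Theory.
Local Open Scope classical_set_scope.
Local Open Scope ring_scope.
Local Open Scope ereal_scope.

Section FQN.
Context {d : measure_display} {T : measurableType d} {R : realType}.
Variable mu : {measure set T -> \bar R}.

(* Representatives of elements of L_0^+(mu): measurable functions T -> [0,+oo]. *)
Definition L0p (f : T -> \bar R) : Prop :=
  measurable_fun setT f /\ forall x, 0 <= f x.

Definition chi (A : set T) : T -> \bar R := fun x => (\1_A x)%:E.

(* rho is given on representatives; it must respect a.e. equality so that it
   is a function on L_0^+(mu). *)
Record function_quasinorm (rho : (T -> \bar R) -> \bar R) : Prop := {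
  fqn_ae : forall f g, L0p f -> L0p g -> {ae mu, forall x, f x = g x} -> rho f = rho g ;
  fqn_ge0 : forall f, L0p f -> 0 <= rho f ;
  fqn_F1 : forall (t : R) f, L0p f -> (0 <= t)%R ->
             rho (fun x => t%:E * f x) = t%:E * rho f ;
  fqn_F2 : forall f g, L0p f -> L0p g -> {ae mu, forall x, f x <= g x} -> rho f <= rho g ;
  fqn_F3 : forall E, measurable E -> mu E < +oo -> rho (chi E) < +oo ;
  fqn_F4 : forall E, measurable E -> mu E < +oo -> forall eps : R, (0 < eps)%R ->
             exists2 delta : R, (0 < delta)%R &
               forall A, measurable A -> A `<=` E -> rho (chi A) <= delta%:E ->
                 mu A <= eps%:E ;
  fqn_F5 : exists kappa : R, forall f g, L0p f -> L0p g ->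
             rho (f \+ g) <= kappa%:E * (rho f + rho g) }.

Definition dominating (rho : (T -> \bar R) -> \bar R) (f : T -> \bar R) : Prop :=
  rho f < +oo /\
  forall fn : nat -> T -> \bar R,
    (forall n, L0p (fn n)) ->
    (forall n, {ae mu, forall x, fn n.+1 x <= fn n x}) ->
    {ae mu, forall x, fn 0%N x <= f x} ->
    {ae mu, forall x, fn ^~ x @ \oo --> 0} ->
    (fun n => rho (fn n)) @ \oo --> 0.

End FQN.

From mathcomp Require Import all_boot all_order all_algebra.
From mathcomp Require Import all_classical all_reals all_analysis measurable_realfun.
Import Order.TTheory GRing.Theory Num.Theory.
Local Open Scope classical_set_scope.
Local Open Scope ring_scope.
Local Open Scope ereal_scope.

(* The forward implication is immediate: (f chi_{A_n}) is a non-increasing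
   sequence below f tending to 0 everywhere.  Conversely, let f_n <= f decrease
   to 0 a.e., and fix eta > 0.  Off a null set N, the exceedance sets
   A_n = [eta f < f_n] \ N decrease to the empty set (f_n x eventually drops
   below eta f x, also when f x = +oo), and f_n <= eta f + f chi_{A_n}.  The
   quasi-triangle inequality gives rho(f_n) <= K (eta rho(f) + rho(f chi_{A_n})),
   which is small for eta small and n large since rho(f) < +oo. *)

Lemma nonneg_cvge0P {R : realType} {u : nat -> \bar R} : (forall n, 0 <= u n) ->
  u @ \oo --> 0 <-> forall e : R, (0 < e)%R -> \forall n \near \oo, u n <= e%:E.
Proof.
move=> u0; split=> [/fine_cvgP [ufin /cvgr0Pnorm_le ucvg] e e0|ule].
  apply: filterS2 ufin (ucvg e e0) => n /fineK <-; rewrite lee_fin.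
  exact/le_trans/ler_norm.
apply/fine_cvgP; split.
  apply: filterS (ule 1%R ltr01) => n un.
  by rewrite ge0_fin_numE// (le_lt_trans un) ?ltry.
apply/cvgr0Pnorm_le => e e0; apply: filterS (ule e e0) => n /=.
by move: (u0 n); case: (u n) => //= r; rewrite !lee_fin => r0; rewrite ger0_norm.
Qed.

Lemma cvge0_eventually_le_mul {R : realType} {u : nat -> \bar R} {a : \bar R} {eta : R} :
  (0 < eta)%R -> 0 <= a -> (forall k, u k <= a) -> u @ \oo --> 0 ->
  \forall k \near \oo, u k <= eta%:E * a.
Proof.
move=> eta0; rewrite le_eqVlt => /predU1P[<- ua _|a_gt0 _ u0].
  by near=> k; rewrite mule0; exact: ua.
have eta_a_gt0 : 0 < eta%:E * a by rewrite mule_gt0// lte_fin.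
near=> k; apply: ltW; near: k; apply: (u0 [set y | y < eta%:E * a]).
by apply: open_nbhs_nbhs; split; [exact: open_ereal_lt_ereal|].
Unshelve. all: by end_near. Qed.

Lemma bigcap0_eventually_notin {T : Type} {A : nat -> set T} :
  (forall n, A n.+1 `<=` A n) -> \bigcap_n A n = set0 ->
  forall x, \forall n \near \oo, ~ A n x.
Proof.
move=> decA A0 x; have /existsNP[m /= Amx] : ~ (\bigcap_n A n) x by rewrite A0.
exists m => // n /= /subnK <-.
by elim: (n - m)%N => // k IHk /decA.
Qed.

Section chi_L0p.
Context {d : measure_display} {T : measurableType d} {R : realType}.
Implicit Types (A B : set T) (f g : T -> \bar R).

Lemma chi_ge0 A x : 0 <= chi A x :> \bar R.
Proof. by rewrite lee_fin. Qed.

Lemma chi_le1 A x : chi A x <= 1 :> \bar R.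
Proof. by rewrite lee_fin indicE; case: (x \in A). Qed.

Lemma chi_le_subset A B x : A `<=` B -> chi A x <= chi B x :> \bar R.
Proof.
move=> AB; rewrite lee_fin !indicE.
by case: (boolP (x \in A)) => // /set_mem/AB/mem_set ->.
Qed.

Lemma measurable_chi A : measurable A -> measurable_fun setT (chi A : T -> \bar R).
Proof. by move=> mA; apply: measurableT_comp => //; exact: measurable_indic. Qed.

Lemma mul_chi_le f A x : 0 <= f x -> f x * chi A x <= f x.
Proof. by move=> f0; rewrite -[leRHS]mule1 lee_wpmul2l// chi_le1. Qed.

Lemma L0p_mul_chi {f A} : L0p f -> measurable A -> L0p (fun x => f x * chi A x).
Proof.
move=> [mf f0] mA; split; first exact/emeasurable_funM/measurable_chi.
by move=> x; rewrite mule_ge0// chi_ge0.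
Qed.

Lemma L0p_scale {t : R} {f} : (0 <= t)%R -> L0p f -> L0p (fun x => t%:E * f x).
Proof.
move=> t0 [mf f0]; split; first exact: measurable_funeM.
by move=> x; rewrite mule_ge0.
Qed.

Lemma L0p_add {f g} : L0p f -> L0p g -> L0p (f \+ g).
Proof.
move=> [mf f0] [mg g0]; split; first exact: emeasurable_funD.
by move=> x; rewrite adde_ge0.
Qed.

End chi_L0p.

Lemma fqn_quasi_triangle {d} {T : measurableType d} {R : realType}
    {mu : {measure set T -> \bar R}} {rho : (T -> \bar R) -> \bar R} :
  function_quasinorm mu rho -> exists2 K : R, (0 < K)%R &
  forall f g, L0p f -> L0p g -> rho (f \+ g) <= K%:E * (rho f + rho g).
Proof.
move=> fq; have [kappa kappaP] := fqn_F5 fq.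
exists (Num.max kappa 1%R); first by rewrite lt_max ltr01 orbT.
move=> f g Lf Lg; apply: le_trans (kappaP _ _ Lf Lg) _.
by rewrite lee_wpmul2r ?lee_fin ?le_max ?lexx// adde_ge0// (fqn_ge0 fq).
Qed.

Lemma dominating_mul_chi_cvg0 {d} {T : measurableType d} {R : realType}
    {mu : {measure set T -> \bar R}} {rho : (T -> \bar R) -> \bar R} {f}
    (A : nat -> set T) :
  L0p f -> dominating mu rho f ->
  (forall n, measurable (A n)) -> (forall n, A n.+1 `<=` A n) ->
  \bigcap_n A n = set0 ->
  (fun n => rho (fun x => f x * chi (A n) x)) @ \oo --> 0.
Proof.
move=> Lf [_ fdom] mA decA A0; have f0 := Lf.2.
apply: fdom => [n|n||].
- exact: L0p_mul_chi.
- by apply: aeW => x; rewrite lee_wpmul2l// chi_le_subset.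
- by apply: aeW => x; rewrite mul_chi_le.
- apply: aeW => x; apply: cvg_near_cst.
  apply: filterS (bigcap0_eventually_notin decA A0 x) => n Anx.
  by rewrite /chi indicE memNset ?mule0.
Qed.

Section dominating_criterion.
Context {d : measure_display} {T : measurableType d} {R : realType}.
Context {mu : {measure set T -> \bar R}} {rho : (T -> \bar R) -> \bar R}.
Hypothesis fq : function_quasinorm mu rho.
Context {f : T -> \bar R} {fn : nat -> T -> \bar R} {N : set T}.
Hypotheses (Lf : L0p f) (Lfn : forall n, L0p (fn n)).
Hypotheses (mN : measurable N) (N0 : mu N = 0).
Hypothesis fn_good : forall {x}, ~ N x ->
  [/\ forall n, fn n.+1 x <= fn n x, fn 0%N x <= f x & fn ^~ x @ \oo --> 0].

Let fn_le_f {x} : ~ N x -> forall n, fn n x <= f x.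
Proof.
move=> /fn_good[fn_noninc fn0_le _]; elim=> // n IHn.
exact: le_trans (fn_noninc n) IHn.
Qed.

Definition exceedance (eta : R) n : set T :=
  [set x | eta%:E * f x < fn n x] `\` N.

Lemma measurable_exceedance eta n : measurable (exceedance eta n).
Proof.
apply: measurableD => //; rewrite -[X in measurable X]setTI.
by apply: measurable_lte => //; [exact/measurable_funeM/Lf.1|exact: (Lfn n).1].
Qed.

Lemma exceedance_nonincreasing eta n : exceedance eta n.+1 `<=` exceedance eta n.
Proof.
move=> x [/= lt_fn Nx]; split=> //=.
by have [+ _ _] := fn_good Nx => /(_ n); apply: lt_le_trans.
Qed.

Lemma bigcap_exceedance {eta : R} : (0 < eta)%R -> \bigcap_n exceedance eta n = set0.
Proof.
move=> eta0; apply/seteqP; split=> // x exc_x; have [_ Nx] := exc_x 0%N I.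
have [_ _ fn_cvg] := fn_good Nx.
have [m _ fn_small] := cvge0_eventually_le_mul eta0 (Lf.2 x) (fn_le_f Nx) fn_cvg.
have [/= + _] := exc_x m I.
by rewrite ltNge => /negP; apply; apply: fn_small => /=.
Qed.

Lemma fn_le_exceedance eta n x : (0 <= eta)%R -> ~ N x ->
  fn n x <= eta%:E * f x + f x * chi (exceedance eta n) x.
Proof.
move=> eta0 Nx; rewrite /chi indicE.
have [exc_x|exc_x] := boolP (x \in exceedance eta n).
  by rewrite mule1 lee_paddl ?(fn_le_f Nx)// mule_ge0// Lf.2.
rewrite mule0 adde0 leNgt; apply/negP => lt_fn; move/negP: exc_x; apply.
exact/mem_set.
Qed.

Lemma rho_fn_le_exceedance {K eta : R} :
  (forall g h, L0p g -> L0p h -> rho (g \+ h) <= K%:E * (rho g + rho h)) ->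
  (0 <= eta)%R -> forall n, rho (fn n) <=
    K%:E * (eta%:E * rho f + rho (fun x => f x * chi (exceedance eta n) x)).
Proof.
move=> K_triangle eta0 n.
have Leta := L0p_scale eta0 Lf.
have Lchi := L0p_mul_chi Lf (measurable_exceedance eta n).
rewrite -(fqn_F1 fq Lf eta0); apply: le_trans (K_triangle _ _ Leta Lchi).
apply: (fqn_F2 fq (Lfn n) (L0p_add Leta Lchi)).
by exists N; split => // x /=; apply: contra_notP => Nx; exact: fn_le_exceedance.
Qed.

Lemma rho_fn_cvg0 : rho f < +oo ->
  (forall A : nat -> set T, (forall n, measurable (A n)) ->
     (forall n, A n.+1 `<=` A n) -> \bigcap_n A n = set0 ->
     (fun n => rho (fun x => f x * chi (A n) x)) @ \oo --> 0) ->
  (fun n => rho (fn n)) @ \oo --> 0.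
Proof.
move=> rf_fin chi_cvg0; have [K K0 K_triangle] := fqn_quasi_triangle fq.
apply/nonneg_cvge0P => [n|e e0]; first exact: (fqn_ge0 fq).
pose c := (e / K / 2)%R; have c0 : (0 < c)%R by rewrite !divr_gt0.
pose r := fine (rho f); have r0 : (0 <= r)%R by rewrite fine_ge0// (fqn_ge0 fq).
have rfE : rho f = r%:E by rewrite fineK// ge0_fin_numE// (fqn_ge0 fq).
pose eta := (c / (r + 1))%R; have eta0 : (0 < eta)%R by rewrite divr_gt0// ltr_wpDl.
have eta_rf : eta%:E * rho f <= c%:E.
  rewrite rfE -EFinM lee_fin mulrAC ler_pdivrMr ?ltr_wpDl//.
  by rewrite ler_wpM2l ?ltW// ltrDl.
have rho_exc_ge0 n := fqn_ge0 fq (L0p_mul_chi Lf (measurable_exceedance eta n)).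
have /(nonneg_cvge0P rho_exc_ge0) /(_ c c0) := chi_cvg0 _ (measurable_exceedance eta)
  (exceedance_nonincreasing eta) (bigcap_exceedance eta0).
apply: filterS => n rho_exc_le.
apply: le_trans (rho_fn_le_exceedance K_triangle (ltW eta0) n) _.
have -> : e = (K * (c + c))%R by rewrite -splitr mulrC divfK ?gt_eqF.
rewrite (EFinM K) EFinD; apply: lee_wpmul2l; first by rewrite lee_fin ltW.
exact: leeD.
Qed.

End dominating_criterion.

Theorem proposition3p22 (d : measure_display) (T : measurableType d) (R : realType)
  (mu : {measure set T -> \bar R}) (rho : (T -> \bar R) -> \bar R)
  (f : T -> \bar R) :
  sigma_finite setT mu ->
  function_quasinorm mu rho ->
  L0p f -> rho f < +oo ->
  (dominating mu rho f <->
   forall A : nat -> set T,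
     (forall n, measurable (A n)) ->
     (forall n, A n.+1 `<=` A n) ->
     \bigcap_n A n = set0 ->
     (fun n => rho (fun x => f x * chi (A n) x)) @ \oo --> 0).
Proof.
move=> _ fq Lf rf_fin; split=> [fdom A|chi_cvg0].
  exact: dominating_mul_chi_cvg0 Lf fdom.
split=> // fn Lfn fn_noninc fn0_le fn_cvg0.
have [N [mN N0 /subsetCl fn_good]] : {ae mu, forall x,
    [/\ forall n, fn n.+1 x <= fn n x, fn 0%N x <= f x & fn ^~ x @ \oo --> 0]}.
  by apply: filterS3 (ae_foralln fn_noninc) fn0_le fn_cvg0 => x; exact: And3.
exact: (rho_fn_cvg0 fq Lf Lfn mN N0 fn_good rf_fin chi_cvg0).
Qed.
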